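(* Let $H$ be the graph consisting of three vertex-disjoint copies of $K_{4,4}$. For every coloring of the edges of $H$ with two colors, there exist two vertex-disjoint monochromatic cycles of the same color, each chordless in the subgraph formed by the edges of that color, and these two cycles lie in different copies of $K_{4,4}$. *)

From mathcomp Require Import all_boot.
Set Implicit Arguments. Unset Strict Implicit. Unset Printing Implicit Defensive.

(* Vertices of H = 3 disjoint copies of K_{4,4}:
   (c, side, i) = vertex i (of 4) on side [side] of copy c (of 3). *)
Definition V := ('I_3 * bool * 'I_4)%type.

Definition copy_of (v : V) : 'I_3 := v.1.1.
Definition side_of (v : V) : bool := v.1.2.
Definition idx_of (v : V) : 'I_4 := v.2.

(* A 2-colouring of the edges of H: the edge of copy c between the
   left vertex i (side false) and right vertex j (side true) gets colour
   col c i j. *)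
Definition coloring := 'I_3 -> 'I_4 -> 'I_4 -> bool.

Definition H_adj (u v : V) : bool :=
  (copy_of u == copy_of v) && (side_of u != side_of v).

(* colour of the pair {u,v} (meaningful only when H_adj u v) *)
Definition edge_color (col : coloring) (u v : V) : bool :=
  if side_of u then col (copy_of u) (idx_of v) (idx_of u)
  else col (copy_of u) (idx_of u) (idx_of v).

Definition adjc (col : coloring) (k : bool) : rel V :=
  fun u v => H_adj u v && (edge_color col u v == k).

Definition is_cycle (e : rel V) (s : seq V) : Prop :=
  2 < size s /\ uniq s /\ cycle e s.

Definition vdef : V := (ord0, false, ord0).

Definition chordless (e : rel V) (s : seq V) : Prop :=
  forall i j, i < size s -> j < size s ->
    e (nth vdef s i) (nth vdef s j) ->
    j = i.+1 %% size s \/ i = j.+1 %% size s.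

From mathcomp Require Import all_boot zify.

(* A copy of K_{4,4} has 16 edges on 8 vertices, so in any 2-colouring one
   colour class of the copy has at least as many edges as vertices.  Deleting
   vertices of degree at most 1 preserves this inequality, so that colour class
   contains a nonempty subgraph of minimum degree 2; closing up a maximal path
   there gives a cycle, and a shortest cycle is chordless, since a chord would
   split off a shorter one.  Two of the three copies get the same colour, and
   cycles in different copies are disjoint. *)

Lemma cycle_nthP {T : Type} {e : rel T} (x0 : T) {s : seq T} :
  reflect (forall i, i < size s -> e (nth x0 s i) (nth x0 s (i.+1 %% size s)))
          (cycle e s).
Proof.
case: s => [|x p]; first by left.
have nth_succ i : i < (size p).+1 ->
    nth x0 (rcons p x) i = nth x0 (x :: p) (i.+1 %% (size p).+1).
  rewrite ltnS leq_eqVlt => /orP[/eqP-> | lt_ip].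
    by rewrite modnn nth_rcons ltnn eqxx.
  by rewrite modn_small // nth_rcons lt_ip.
have nth_rcons_self i : i < (size p).+1 ->
    nth x0 (x :: rcons p x) i = nth x0 (x :: p) i.
  by move=> lt_ip; rewrite -rcons_cons nth_rcons /= lt_ip.
apply: (iffP (pathP x0)) => [e_p i lt_ip | e_s i].
  by rewrite -nth_succ // -nth_rcons_self // e_p ?size_rcons.
by rewrite size_rcons => lt_ip; rewrite nth_succ // nth_rcons_self // e_s.
Qed.

Definition arcs (e : rel V) (A : {set V}) : {set V * V} :=
  [set p | [&& p.1 \in A, p.2 \in A & e p.1 p.2]].

Definition nbhd (e : rel V) (A : {set V}) (x : V) : {set V} :=
  [set y in A | e x y].

Section Graph.

Variable e : rel V.
Hypotheses (e_sym : symmetric e) (e_irr : irreflexive e).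

Lemma card_arcs_setD1 (A : {set V}) v :
  #|arcs e A| <= #|arcs e (A :\ v)| + 2 * #|nbhd e A v|.
Proof.
have sub_arcs : arcs e A \subset arcs e (A :\ v) :|:
    ((fun y => (v, y)) @: nbhd e A v :|: (fun y => (y, v)) @: nbhd e A v).
  apply/subsetP => -[x y]; rewrite /arcs !inE /= => /and3P[xA yA exy].
  have [<- | xv] := eqVneq x v.
    by rewrite (imset_f (fun y => (x, y))) ?orbT // !inE yA.
  have [<- | yv] := eqVneq y v; last by rewrite xA yA exy.
  by rewrite (imset_f (fun x => (x, y))) ?orbT // !inE xA e_sym.
rewrite mul2n -addnn; apply: leq_trans (subset_leq_card sub_arcs) _.
apply: leq_trans (leq_card_setU _ _) _; rewrite leq_add2l.
by apply: leq_trans (leq_card_setU _ _) _; rewrite leq_add ?leq_imset_card.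
Qed.

Lemma arcs_set0 : arcs e set0 = set0.
Proof. by apply/setP => p; rewrite !inE. Qed.

Lemma exists_min_degree2_subset (A : {set V}) :
  0 < #|A| -> 2 * #|A| <= #|arcs e A| ->
  exists B : {set V},
    [/\ B \subset A, B != set0 & {in B, forall x, 1 < #|nbhd e B x|}].
Proof.
have [n] := ubnP #|A|; elim: n A => // n IH A lt_An A_gt0 dense.
have [/forall_inP deg2 | ] := boolP [forall x in A, 1 < #|nbhd e A x|].
  by exists A; rewrite -card_gt0.
rewrite negb_forall_in => /exists_inP[v vA]; rewrite -leqNgt => deg_v.
have cardA : #|A| = #|A :\ v| + 1 by rewrite (cardsD1 v A) vA addnC.
have deg_le : #|nbhd e A v| <= #|A :\ v|.
  apply/subset_leq_card/subsetP => y; rewrite !inE => /andP[-> evy].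
  by rewrite andbT; apply: contraTneq evy => ->; rewrite e_irr.
have bound := card_arcs_setD1 A v.
have [|||B [sBA B0 degB]] := IH (A :\ v); [lia | | lia |].
  rewrite lt0n; apply: contraTneq _ dense => /cards0_eq A'0.
  by move: bound deg_le cardA; rewrite A'0 arcs_set0 !cards0 -ltnNge; lia.
by exists B; split=> //; apply: subset_trans sBA (subsetDl _ _).
Qed.

Lemma is_cycle_path_chord x p i :
  uniq (x :: p) -> path e x p -> 0 < i < size p -> e x (nth vdef p i) ->
  is_cycle e (x :: take i.+1 p).
Proof.
move=> uniq_p path_p /andP[i_gt0 lt_ip] chord.
have take_i : take i.+1 p = rcons (take i p) (nth vdef p i) by rewrite (take_nth vdef).
split; first by rewrite /= size_takel.
split; first exact: (take_uniq i.+2 uniq_p).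
have := take_path i.+1 path_p.
by rewrite /= take_i !rcons_path last_rcons (e_sym _ x) chord andbT.
Qed.

Lemma exists_cycle_of_path (B : {set V}) x p :
  {in B, forall y, 1 < #|nbhd e B y|} ->
  uniq (x :: p) -> path e x p -> {subset x :: p <= B} ->
  exists s, is_cycle e s /\ {subset s <= B}.
Proof.
move=> deg2; have [n] := ubnP (#|{: V}| - size p).
elim: n x p => // n IH x p lt_n uniq_p path_p sub_p.
have xB : x \in B by apply: sub_p; rewrite mem_head.
have [/exists_inP[y] | ] := boolP [exists y in nbhd e B x, y \notin x :: p].
  rewrite inE => /andP[yB exy] y_new; apply: (IH y (x :: p)).
  - have /card_uniqP size_yp : uniq (y :: x :: p) by rewrite /= y_new.
    have : (size p).+2 <= #|{: V}|.
      by rewrite -[_.+2]/(size (y :: x :: p)) -size_yp max_card.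
    by rewrite -[size (x :: p)]/(size p).+1; lia.
  - by rewrite /= y_new.
  - by rewrite /= e_sym exy.
  - by move=> u; rewrite inE => /predU1P[-> // | /sub_p].
rewrite negb_exists_in => /forall_inP old_nbhd.
have in_p y : y \in nbhd e B x -> y \in p.
  move=> yN; move/negbNE: (old_nbhd y yN); rewrite inE => /predU1P[yx | //].
  by move: yN; rewrite yx !inE e_irr andbF.
have /card_gt1P[y1 [y2 [y1N y2N y12]]] := deg2 x xB.
have [y [yN y_far]] : exists y, y \in nbhd e B x /\ 0 < index y p.
  have [y1_head | ] := posnP (index y1 p); last by exists y1.
  exists y2; split=> //; rewrite lt0n; apply: contra_neq y12 => y2_head.
  by rewrite -(nth_index vdef (in_p _ y1N)) -(nth_index vdef (in_p _ y2N)) y1_head y2_head.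
exists (x :: take (index y p).+1 p); split.
  have yp := in_p _ yN.
  apply: is_cycle_path_chord => //; first by rewrite y_far index_mem.
  by rewrite nth_index //; move: yN; rewrite inE => /andP[].
by move=> u /(@mem_take (index y p).+2 _ (x :: p)) /sub_p.
Qed.

Lemma is_cycle_shortcut s i j :
  is_cycle e s -> i.+1 < j < size s -> e (nth vdef s i) (nth vdef s j) ->
  is_cycle e (drop i (take j.+1 s)).
Proof.
move=> [_ [uniq_s /(cycle_nthP vdef) e_s]] /andP[lt_ij lt_js] chord.
have size_s' : size (drop i (take j.+1 s)) = j.+1 - i by rewrite size_drop size_takel.
have nth_s' k : k < j.+1 - i -> nth vdef (drop i (take j.+1 s)) k = nth vdef s (i + k).
  by move=> lt_k; rewrite nth_drop nth_take //; lia.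
split; first by rewrite size_s'; lia.
split; first exact/drop_uniq/take_uniq.
apply/(cycle_nthP vdef) => k; rewrite size_s' => lt_k.
have [lt_k1 | | last_k] := ltngtP k.+1 (j.+1 - i).
- rewrite modn_small // !nth_s' // addnS.
  by have := e_s (i + k) ltac:(lia); rewrite modn_small //; lia.
- by lia.
- rewrite -last_k modnn !nth_s' ?addn0 //; last by lia.
  have -> : i + k = j by lia.
  by rewrite e_sym.
Qed.

Lemma exists_chordless_cycle (A : {set V}) s :
  is_cycle e s -> {subset s <= A} ->
  exists s', [/\ is_cycle e s', chordless e s' & {subset s' <= A}].
Proof.
have [n] := ubnP (size s); elim: n s => // n IH s lt_sn cyc_s sub_s.
have [/existsP[[i lt_i] /existsP[[j lt_j] /and3P[/= eij nj ni]]] | no_chord] :=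
  boolP [exists i : 'I_(size s), exists j : 'I_(size s),
           [&& e (nth vdef s i) (nth vdef s j), j != i.+1 %% size s :> nat
             & i != j.+1 %% size s :> nat]]; last first.
  exists s; split=> // i j lt_i lt_j eij.
  move/existsPn: no_chord => /(_ (Ordinal lt_i)) /existsPn /(_ (Ordinal lt_j)) /=.
  by rewrite eij /= negb_and !negbK => /orP[/eqP | /eqP]; [left | right].
wlog lt_ij : i j lt_i lt_j eij nj ni / i < j.
  move=> chord_lt; have [|gt_ij|eq_ij] := ltngtP i j; first exact: chord_lt.
    by apply: (chord_lt j i) => //; rewrite e_sym.
  by rewrite eq_ij e_irr in eij.
have lt_i1j : i.+1 < j by move: nj; rewrite modn_small; lia.
have short : j.+1 - i < size s.
  have [lt_j1 | | eq_j1] := ltngtP j.+1 (size s); [lia | lia |].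
  by move: ni; rewrite -eq_j1 modnn; lia.
apply: (IH (drop i (take j.+1 s))).
- by rewrite size_drop size_takel; lia.
- by apply: is_cycle_shortcut; rewrite ?lt_i1j.
- by move=> x /mem_drop /mem_take /sub_s.
Qed.

Lemma exists_chordless_cycle_dense (A : {set V}) :
  0 < #|A| -> 2 * #|A| <= #|arcs e A| ->
  exists s, [/\ is_cycle e s, chordless e s & {subset s <= A}].
Proof.
move=> A_gt0 dense.
have [B [sBA /set0Pn[x xB] deg2]] := exists_min_degree2_subset _ A_gt0 dense.
have [|s [cyc_s sub_sB]] := @exists_cycle_of_path B x [::] deg2 isT isT.
  by move=> y; rewrite inE => /eqP->.
by apply: exists_chordless_cycle cyc_s _ => y /sub_sB /(subsetP sBA).
Qed.

End Graph.

Definition copy (c : 'I_3) : {set V} := [set v | copy_of v == c].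

Lemma card_copy c : #|copy c| <= 8.
Proof.
have sub : copy c \subset [set (c, w.1, w.2) | w : bool * 'I_4].
  apply/subsetP => -[[c' b] i]; rewrite inE => /eqP /= <-.
  by apply/imsetP; exists (b, i).
apply: leq_trans (subset_leq_card sub) _; apply: leq_trans (leq_imset_card _ _) _.
by rewrite card_prod card_bool card_ord.
Qed.

Lemma card_arcs_copy c : 32 <= #|arcs H_adj (copy c)|.
Proof.
pose f (t : bool * 'I_4 * 'I_4) : V * V := ((c, t.1.1, t.1.2), (c, ~~ t.1.1, t.2)).
have f_inj : injective f by move=> [[b i] j] [[b' i'] j'] [-> -> _ ->].
have sub : [set f t | t : bool * 'I_4 * 'I_4] \subset arcs H_adj (copy c).
  apply/subsetP => _ /imsetP[[[b i] j] _ ->].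
  by rewrite !inE /H_adj /copy_of /side_of /= eqxx; case: b.
apply: leq_trans (subset_leq_card sub); rewrite card_imset //.
by rewrite !card_prod card_bool card_ord.
Qed.

Lemma card_arcs_adjc col A :
  #|arcs (adjc col true) A| + #|arcs (adjc col false) A| = #|arcs H_adj A|.
Proof.
rewrite -(cardsID [set p : V * V | edge_color col p.1 p.2] (arcs H_adj A)).
by congr (_ + _); apply: eq_card => p; rewrite !inE /adjc;
   case: (edge_color col p.1 p.2); rewrite ?andbT ?andbF.
Qed.

Lemma adjc_sym col k : symmetric (adjc col k).
Proof.
move=> [[cu su] iu] [[cv sv] iv].
rewrite /adjc /H_adj /edge_color /copy_of /side_of /idx_of /= eq_sym.
by have [-> | //] := eqVneq cv cu; case: su; case: sv.
Qed.

Lemma adjc_irr col k : irreflexive (adjc col k).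
Proof. by move=> v; rewrite /adjc /H_adj !eqxx. Qed.

Lemma copy_has_chordless_cycle col c : exists k s,
  [/\ is_cycle (adjc col k) s, chordless (adjc col k) s & {subset s <= copy c}].
Proof.
have copy_gt0 : 0 < #|copy c| by apply/card_gt0P; exists (c, false, ord0); rewrite inE.
have dense k : 16 <= #|arcs (adjc col k) (copy c)| -> exists s,
    [/\ is_cycle (adjc col k) s, chordless (adjc col k) s & {subset s <= copy c}].
  move=> many_arcs; apply: exists_chordless_cycle_dense copy_gt0 _.
  - exact: adjc_sym.
  - exact: adjc_irr.
  - by apply: leq_trans _ many_arcs; have := card_copy c; lia.
have := card_arcs_copy c; rewrite -(card_arcs_adjc col).
case: (leqP 16 #|arcs (adjc col true) (copy c)|) => [/dense | few_true total].
  by exists true.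
by exists false; apply: dense; lia.
Qed.

Lemma two_copies_same_colour {P : 'I_3 -> bool -> Prop} :
  (forall c, exists k, P c k) ->
  exists k (c1 c2 : 'I_3), [/\ c1 != c2, P c1 k & P c2 k].
Proof.
move=> exP; pose c1 : 'I_3 := inord 1.
have c01 : ord0 != c1 by rewrite -val_eqE /= inordK.
have c12 : c1 != ord_max by rewrite -val_eqE /= inordK.
have [k0 P0] := exP ord0; have [k1 P1] := exP c1; have [k2 P2] := exP ord_max.
have [e01 | k01] := eqVneq k0 k1; first by exists k0, ord0, c1; rewrite {2}e01.
have [e02 | k02] := eqVneq k0 k2; first by exists k0, ord0, ord_max; rewrite {2}e02.
have e12 : k1 = k2 by move: k01 k02; clear P0 P1 P2; case: k0; case: k1; case: k2.
by exists k1, c1, ord_max; rewrite {2}e12.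
Qed.

Theorem lemma5 (col : coloring) :
  exists (k : bool) (s1 s2 : seq V) (c1 c2 : 'I_3),
    [/\ is_cycle (adjc col k) s1 /\ chordless (adjc col k) s1,
        is_cycle (adjc col k) s2 /\ chordless (adjc col k) s2,
        [disjoint s1 & s2],
        c1 != c2 &
        all (fun v => copy_of v == c1) s1 /\ all (fun v => copy_of v == c2) s2].
Proof.
have [k [c1 [c2 [c12 [s1 [cyc1 chl1 sub1]] [s2 [cyc2 chl2 sub2]]]]]] :=
  two_copies_same_colour (copy_has_chordless_cycle col).
have in_copy c s : {subset s <= copy c} -> all (fun v => copy_of v == c) s.
  by move=> sub_s; apply/allP => v /sub_s; rewrite inE.
exists k, s1, s2, c1, c2; split=> //; last by rewrite !in_copy.
apply/pred0P => v /=; apply: negbTE; apply/andP => -[/sub1 + /sub2].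
by rewrite !inE => /eqP v1 /eqP v2; rewrite -v1 -v2 eqxx in c12.
Qed.
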